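(* Let $A\in\mathbb{R}^{n\times m}$, $B\in\mathbb{R}_+^{n\times k}$ and $C\in\mathbb{R}_+^{k\times m}$ be such that $B\boxtimes C$ is dominated by $A$, i.e. $(B\boxtimes C)_{ij}\le A_{ij}$ for all $i\in[n]$, $j\in[m]$. Then $s(B)+s(C)\ge s(A)$.
   Context: $\mathbb{R}_+=[0,\infty)$ and $[n]=\{1,\dots,n\}$. The max-times product is $(B\boxtimes C)_{ij}=\max_{s=1}^{k} B_{is}C_{sj}$. For a $p\times q$ matrix $X$, its sparsity is $s(X)=\frac{pq-\mathrm{nnz}(X)}{pq}$, where $\mathrm{nnz}(X)$ is the number of nonzero entries of $X$. *)

From HB Require Import structures.
From mathcomp Require Import all_boot all_order all_algebra.
Set Implicit Arguments. Unset Strict Implicit. Unset Printing Implicit Defensive.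
Import Order.TTheory GRing.Theory Num.Theory.
Local Open Scope ring_scope.

(* Max-times product: (B ⊠ C)_ij = max_{s in [k]} B_is * C_sj.
   The fold starts from 0; for nonnegative entries and k >= 1 this is
   exactly the max over s. *)
Definition maxtimes (R : realFieldType) (n k m : nat)
  (B : 'M[R]_(n, k)) (C : 'M[R]_(k, m)) : 'M[R]_(n, m) :=
  \matrix_(i < n, j < m) \big[Num.max/0]_(s < k) (B i s * C s j).

Definition nnz (R : realFieldType) (p q : nat) (X : 'M[R]_(p, q)) : nat :=
  #|[set ij : 'I_p * 'I_q | X ij.1 ij.2 != 0]|.

Definition sparsity (R : realFieldType) (p q : nat) (X : 'M[R]_(p, q)) : R :=
  (((p * q)%:R - (nnz X)%:R) / (p * q)%:R).

(** Fix an inner index s. Every pair (i, j) with B i s != 0 and C s j != 0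
    gives a positive term B i s * C s j <= A i j, so the r_s nonzero entries
    of column s of B and the c_s nonzero entries of row s of C span an
    r_s x c_s block of nonzeros of A: r_s c_s <= nnz A. Since
    (n - r_s)(m - c_s) >= 0 this yields r_s m + c_s n <= n m + nnz A, and
    summing over s gives nnz B * m + nnz C * n <= k (n m + nnz A), which is
    the claim after division by n m k. *)

From HB Require Import structures.
From mathcomp Require Import all_boot all_order all_algebra.
From mathcomp Require Import zify ring.
Set Implicit Arguments. Unset Strict Implicit. Unset Printing Implicit Defensive.
Import Order.TTheory GRing.Theory Num.Theory.
Local Open Scope ring_scope.

Section Support.
Variables (R : realFieldType) (p q : nat).
Implicit Type X : 'M[R]_(p, q).

Definition row_support X (i : 'I_p) : {set 'I_q} := [set j | X i j != 0].
Definition col_support X (j : 'I_q) : {set 'I_p} := [set i | X i j != 0].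

Lemma nnz_sum_row X : nnz X = (\sum_(i < p) #|row_support X i|)%N.
Proof.
under eq_bigr do rewrite -sum1dep_card.
by rewrite /nnz -sum1dep_card pair_big_dep.
Qed.

Lemma nnz_sum_col X : nnz X = (\sum_(j < q) #|col_support X j|)%N.
Proof.
under eq_bigr do rewrite -sum1dep_card.
rewrite /nnz -sum1dep_card [RHS](exchange_big_dep predT) //= pair_big_dep.
by apply: eq_bigl.
Qed.

Lemma sparsityE X :
  (0 < p)%N -> (0 < q)%N -> sparsity X = 1 - (nnz X)%:R / (p * q)%:R.
Proof.
move=> p_gt0 q_gt0; rewrite /sparsity mulrBl divff // pnatr_eq0 -lt0n.
by rewrite muln_gt0 p_gt0.
Qed.

End Support.

Lemma maxtimes_ge (R : realFieldType) (n k m : nat)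
    (B : 'M[R]_(n, k)) (C : 'M[R]_(k, m)) i s j :
  B i s * C s j <= maxtimes B C i j.
Proof. by rewrite mxE; apply: le_bigmax. Qed.

Section DominatedMaxTimes.
Variables (R : realFieldType) (n k m : nat).
Variables (A : 'M[R]_(n, m)) (B : 'M[R]_(n, k)) (C : 'M[R]_(k, m)).
Hypotheses (B_ge0 : forall i s, 0 <= B i s) (C_ge0 : forall s j, 0 <= C s j).
Hypothesis maxtimes_le : forall i j, maxtimes B C i j <= A i j.

Lemma supports_block_sub s :
  setX (col_support B s) (row_support C s) \subset [set ij | A ij.1 ij.2 != 0].
Proof.
apply/subsetP => -[i j]; rewrite !inE /= => /andP[Bis Csj].
have BC_gt0 : 0 < B i s * C s j.
  by rewrite mulr_gt0 // lt0r ?Bis ?Csj ?B_ge0 ?C_ge0.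
by rewrite gt_eqF // (lt_le_trans BC_gt0) // (le_trans (maxtimes_ge _ _ _ _ _)).
Qed.

Lemma card_supports_le_nnz s :
  (#|col_support B s| * #|row_support C s| <= nnz A)%N.
Proof. by rewrite -cardsX; apply/subset_leq_card/supports_block_sub. Qed.

Lemma nnz_weighted_le : (nnz B * m + nnz C * n <= k * (n * m + nnz A))%N.
Proof.
have block_bound s :
    (#|col_support B s| * m + #|row_support C s| * n <= n * m + nnz A)%N.
  have := card_supports_le_nnz s.
  have := max_card (col_support B s); have := max_card (row_support C s).
  rewrite !card_ord; nia.
rewrite nnz_sum_col (nnz_sum_row C) !big_distrl -big_split /=.
have -> : (k * (n * m + nnz A) = \sum_(s < k) (n * m + nnz A))%N.
  by rewrite sum_nat_const card_ord.
by apply: leq_sum => s _; apply: block_bound.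
Qed.

End DominatedMaxTimes.

Theorem theorem3 (R : realFieldType) (n m k : nat)
  (A : 'M[R]_(n, m)) (B : 'M[R]_(n, k)) (C : 'M[R]_(k, m)) :
  (0 < n)%N -> (0 < m)%N -> (0 < k)%N ->
  (forall i s, 0 <= B i s) -> (forall s j, 0 <= C s j) ->
  (forall i j, maxtimes B C i j <= A i j) ->
  sparsity A <= sparsity B + sparsity C.
Proof.
move=> n_gt0 m_gt0 k_gt0 B_ge0 C_ge0 maxtimes_le.
have := nnz_weighted_le B_ge0 C_ge0 maxtimes_le.
rewrite -(ler_nat R) !(natrD, natrM) !sparsityE // !natrM.
set a := (nnz A)%:R; set b := (nnz B)%:R; set c := (nnz C)%:R.
set N := n%:R; set M := m%:R; set K := k%:R => counting.
have [N_gt0 M_gt0 K_gt0] : [/\ 0 < N, 0 < M & 0 < K] by rewrite !ltr0n.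
rewrite -subr_ge0.
have -> : 1 - b / (N * K) + (1 - c / (K * M)) - (1 - a / (N * M))
    = (K * (N * M + a) - (b * M + c * N)) / (N * M * K).
  by field; rewrite !gt_eqF.
by rewrite divr_ge0 ?subr_ge0 // !mulr_ge0 ?ltW.
Qed.
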